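(* Suppose a graph $G$ has nonadjacent simplicial vertices $u$ and $v$ with $N(u)\cap N(v)\neq\emptyset$, and there exist distinct vertices $x\in N(u)$ and $y\in N(v)$ that are nonadjacent. Then $G$ is not well-bicovered.
   Context: All graphs are finite and simple; ''subgraph'' means induced subgraph. $N(w)$ is the open neighborhood of $w$. A vertex is simplicial if its neighborhood induces a complete graph. A graph is well-bicovered if every vertex-inclusion-maximal induced bipartite subgraph has the same order. *)

From mathcomp Require Import all_boot.
Set Implicit Arguments. Unset Strict Implicit. Unset Printing Implicit Defensive.

Definition simple_graph (T : finType) (e : rel T) : Prop :=
  symmetric e /\ irreflexive e.

Definition nbhd (T : finType) (e : rel T) (w : T) : {set T} := [set x | e w x].

Definition simplicial (T : finType) (e : rel T) (w : T) : Prop :=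
  forall x y, x \in nbhd e w -> y \in nbhd e w -> x != y -> e x y.

Definition independent (T : finType) (e : rel T) (A : {set T}) : Prop :=
  forall x y, x \in A -> y \in A -> ~~ e x y.

Definition induces_bipartite (T : finType) (e : rel T) (S : {set T}) : Prop :=
  exists A B : {set T}, [/\ A :|: B = S, [disjoint A & B],
                           independent e A & independent e B].

Definition maximal_bipartite (T : finType) (e : rel T) (S : {set T}) : Prop :=
  induces_bipartite e S /\
  forall S' : {set T}, S \proper S' -> ~ induces_bipartite e S'.

Definition well_bicovered (T : finType) (e : rel T) : Prop :=
  forall S1 S2 : {set T}, maximal_bipartite e S1 -> maximal_bipartite e S2 ->
    #|S1| = #|S2|.

From mathcomp Require Import all_boot.
From mathcomp Require Import boolp.

(* Let [w] be a common neighbour of [u] and [v].  Since [v] is simplicial and [x]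
   is not adjacent to [y] in N(v), [x] is not in N(v), so [x <> w]; as [u] is
   simplicial, [w] is adjacent to [x], and likewise to [y].  Extend the path
   [x w y] to a maximal induced bipartite subgraph [S].  In any bipartition of
   [S], [x] and [y] lie opposite [w], so [u] and [v] (adjacent to [w] and to [x],
   resp. [y]) lie outside [S] and, being simplicial, have no neighbour on the
   side of [w] other than [w].  Replacing [w] by the nonadjacent pair [u], [v]
   gives a larger induced bipartite subgraph, which extends to a maximal one of
   order greater than [#|S|]. *)

Set Implicit Arguments.
Unset Strict Implicit.
Unset Printing Implicit Defensive.

Lemma maximal_superset_exists (T : finType) (P : {set T} -> Prop) (S0 : {set T}) :
  P S0 ->
  exists2 S : {set T}, S0 \subset S & P S /\ forall S' : {set T}, S \proper S' -> ~ P S'.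
Proof.
move=> /asboolT PS0.
have [S /maxsetP[PS maxS] sub] := @maxset_exists T (fun S => `[< P S >]) S0 PS0.
exists S => //; split=> [|S' ltSS' PS']; first exact/asboolP.
have eqS'S := maxS S' (asboolT PS') (proper_sub ltSS').
by move: (proper_neq ltSS'); rewrite eqS'S eqxx.
Qed.

Section Bipartite.

Variables (T : finType) (e : rel T).
Hypotheses (e_sym : symmetric e) (e_irr : irreflexive e).

Lemma in_nbhd (w x : T) : (x \in nbhd e w) = e w x.
Proof. by rewrite inE. Qed.

Lemma simplicial_edge (u x y : T) :
  simplicial e u -> e u x -> e u y -> x != y -> e x y.
Proof. by move=> su ux uy; apply: su; rewrite in_nbhd. Qed.

Lemma simplicial_nbhd_independent (A : {set T}) (u w z : T) :
  simplicial e u -> independent e A -> w \in A -> z \in A -> e u w -> e u z ->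
  z = w.
Proof.
move=> su iA wA zA uw uz; apply/eqP; apply: contraNT (iA _ _ wA zA) => zw.
by apply: simplicial_edge su uw uz _; rewrite eq_sym.
Qed.

Lemma independentS (A B : {set T}) :
  A \subset B -> independent e B -> independent e A.
Proof. by move=> sAB iB x y xA yA; apply: iB; apply: (subsetP sAB). Qed.

Lemma independentU1 (u : T) (A : {set T}) :
  (forall z, z \in A -> ~~ e u z) -> independent e A -> independent e (u |: A).
Proof.
move=> nuA iA x y /setU1P[->|xA] /setU1P[->|yA]; rewrite ?e_irr ?nuA //.
  by rewrite e_sym nuA.
exact: iA.
Qed.

Lemma induces_bipartite_side (S : {set T}) (w : T) :
  induces_bipartite e S -> w \in S ->
  exists A B : {set T}, [/\ A :|: B = S, [disjoint A & B],
                           independent e A, independent e B & w \in A].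
Proof.
move=> [A [B [AB dAB iA iB]]]; rewrite -AB => /setUP[wA|wB].
  by exists A, B.
by exists B, A; rewrite setUC disjoint_sym.
Qed.

Lemma induces_bipartite_swap (A B : {set T}) (u v w : T) :
  simplicial e u -> simplicial e v -> ~~ e u v -> e u w -> e v w ->
  [disjoint A & B] -> independent e A -> independent e B ->
  w \in A -> u \notin B -> v \notin B ->
  induces_bipartite e (u |: (v |: ((A :|: B) :\ w))).
Proof.
move=> su sv nuv uw vw dAB iA iB wA uB vB.
have wB : w \notin B by rewrite (disjointFr dAB wA).
have nbA z : z \in A :\ w -> ~~ e u z /\ ~~ e v z.
  case/setD1P=> zw zA; split; apply: contra zw => ez; apply/eqP.
    exact: simplicial_nbhd_independent su iA wA zA uw ez.
  exact: simplicial_nbhd_independent sv iA wA zA vw ez.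
exists (u |: (v |: (A :\ w))), B; split.
- have BDw : B :\ w = B by apply/setDidPl; rewrite disjoint_sym disjoints1.
  by rewrite setDUl BDw !setUA.
- rewrite disjoints_subset !subUset !sub1set !inE uB vB -disjoints_subset.
  exact: disjointWl (subD1set A w) dAB.
- apply: independentU1; last first.
    apply: independentU1 => [z /nbA[]//|].
    exact: independentS (subD1set A w) iA.
  by move=> z /setU1P[->|/nbA[]//].
- exact: iB.
Qed.

End Bipartite.

Lemma well_bicovered_card (T : finType) (e : rel T) (S S' : {set T}) :
  well_bicovered e -> maximal_bipartite e S -> induces_bipartite e S' ->
  #|S'| <= #|S|.
Proof.
move=> wb maxS bS'; have [S2 subS'S2 maxS2] := maximal_superset_exists bS'.
by rewrite (wb S S2 maxS maxS2) subset_leq_card.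
Qed.

Section SimplicialPair.

Variables (T : finType) (e : rel T).
Hypotheses (e_sym : symmetric e) (e_irr : irreflexive e).
Variables (u v w x y : T).
Hypotheses (su : simplicial e u) (sv : simplicial e v).
Hypotheses (uv : u != v) (nuv : ~~ e u v).
Hypotheses (uw : e u w) (vw : e v w) (ux : e u x) (vy : e v y).
Hypotheses (wx : e w x) (wy : e w y).

Lemma induces_bipartite_augment (S : {set T}) :
  induces_bipartite e S -> w \in S -> x \in S -> y \in S ->
  exists2 S' : {set T}, induces_bipartite e S' & #|S| < #|S'|.
Proof.
move=> bS wS xS yS; have [A [B [AB dAB iA iB wA]]] := induces_bipartite_side bS wS.
have opposite_w z : z \in S -> e w z -> z \in B.
  by rewrite -AB => /setUP[zA wz|//]; move: (iA _ _ wA zA); rewrite wz.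
have outside_S z t : e z w -> e z t -> t \in B -> (z \in B = false) /\ (z \in S = false).
  move=> zw zt tB; have zB : z \in B = false.
    by apply/negP => zB; move: (iB _ _ zB tB); rewrite zt.
  split=> //; rewrite -AB inE zB orbF; apply/negP => zA.
  by move: (iA _ _ zA wA); rewrite zw.
have [uB uS] := outside_S u x uw ux (opposite_w x xS wx).
have [vB vS] := outside_S v y vw vy (opposite_w y yS wy).
exists (u |: (v |: (S :\ w))).
  by rewrite -AB; apply: induces_bipartite_swap; rewrite ?uB ?vB.
by rewrite !cardsU1 !inE (negbTE uv) uS vS !andbF (cardsD1 w S) wS.
Qed.

End SimplicialPair.

Unset Implicit Arguments.

Theorem mainTheorem16 (T : finType) (e : rel T) :
  simple_graph e ->
  forall u v : T,
    simplicial e u -> simplicial e v -> u != v -> ~~ e u v ->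
    nbhd e u :&: nbhd e v != set0 ->
    (exists x y : T, [/\ x \in nbhd e u, y \in nbhd e v, x != y & ~~ e x y]) ->
    ~ well_bicovered e.
Proof.
move=> [e_sym e_irr] u v su sv uv nuv /set0Pn[w /setIP[]].
rewrite !in_nbhd => uw vw [x [y [+ + xy nxy]]] wb; rewrite !in_nbhd => ux vy.
have wx : w != x.
  by apply: contraNneq nxy => wx; apply: simplicial_edge sv _ vy xy; rewrite -wx.
have wy : w != y.
  by apply: contraNneq nxy => wy; apply: simplicial_edge su ux _ xy; rewrite -wy.
have bip_wxy : induces_bipartite e (w |: [set x; y]).
  exists [set w], [set x; y]; split => //.
  - by rewrite disjoints1 !inE negb_or wx wy.
  - by move=> a b /set1P-> /set1P->; rewrite e_irr.
  - by move=> a b /set2P[]-> /set2P[]->; rewrite ?e_irr // e_sym.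
have [S /subsetP sub maxS] := maximal_superset_exists bip_wxy.
have [S' bS' ltSS'] := induces_bipartite_augment e_sym e_irr su sv uv nuv uw vw ux vy
  (simplicial_edge su uw ux wx) (simplicial_edge sv vw vy wy) maxS.1
  (sub w (setU11 w _)) (sub x (setU1r w (set21 x y))) (sub y (setU1r w (set22 x y))).
by have := well_bicovered_card wb maxS bS'; rewrite leqNgt ltSS'.
Qed.
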